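(* Let $\mathfrak g$ be a complex finite-dimensional simple Lie algebra with simple roots $\alpha_1,\dots,\alpha_n$ and Cartan matrix $a_{ij}=2(\alpha_i,\alpha_j)/(\alpha_i,\alpha_i)$. If $m$ is a real symmetric $n\times n$ matrix with $2m_{ij}=a_{ij}m_{ii}$ for all $i\neq j$ (all simple roots $m$-Cartan), then there is $r\in\mathbb R$ with $m_{ij}=r(\alpha_i,\alpha_j)$ for all $i,j$. In particular, if $q$ is a primitive $\ell$-th root of unity, $q_{ij}=q^{(\alpha_i,\alpha_j)}$, $\ell_i:=\ell/\gcd(\ell,(\alpha_i,\alpha_i))$ satisfies $\ell_i>1-a_{ij}$ for all $i\neq j$, and $m$ realises $q$, then $m_{ij}=r(\alpha_i,\alpha_j)$ for some $r\in\mathbb R$.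
   Context: $m$ realises $q$ means: $e^{i\pi m_{ij}}=q_{ij}$ for all $i,j$, and for every pair $i\ne j$ either (A) $2m_{ij}=a_{ij}m_{ii}$ or (B) $(1-a_{ij})m_{ii}=2$ holds, where $a$ is the Cartan matrix of the braiding (here equal to that of $\mathfrak g$), and the same holds after any finite sequence of Weyl groupoid reflections $\mathcal R^k:\alpha_i\mapsto\alpha_i-a_{ki}\alpha_k$ applied simultaneously to $m$ (as a bilinear form) and $q$ (as a bicharacter). *)

From Stdlib Require Import Reals ZArith List.
Open Scope R_scope.

Definition fsumR (n : nat) (f : nat -> R) : R :=
  fold_right Rplus 0 (map f (seq 0 n)).

Record Cplx := mkCplx { Cre : R; Cim : R }.
Definition C1 : Cplx := mkCplx 1 0.
Definition Cmul (z w : Cplx) : Cplx :=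
  mkCplx (Cre z * Cre w - Cim z * Cim w) (Cre z * Cim w + Cim z * Cre w).
Definition Cinv (z : Cplx) : Cplx :=
  let d := Cre z * Cre z + Cim z * Cim z in mkCplx (Cre z / d) (- Cim z / d).
Fixpoint Cpow_nat (z : Cplx) (k : nat) : Cplx :=
  match k with O => C1 | S k' => Cmul z (Cpow_nat z k') end.
Definition Cpow (z : Cplx) (k : Z) : Cplx :=
  match k with
  | Z0 => C1
  | Zpos p => Cpow_nat z (Pos.to_nat p)
  | Zneg p => Cpow_nat (Cinv z) (Pos.to_nat p)
  end.
Definition fprodC (n : nat) (f : nat -> Cplx) : Cplx :=
  fold_right Cmul C1 (map f (seq 0 n)).
Definition Cexp_ipi (x : R) : Cplx := mkCplx (cos (PI * x)) (sin (PI * x)).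

Definition primitive_root (l : Z) (q : Cplx) : Prop :=
  (0 < l)%Z /\ Cpow q l = C1 /\ (forall k : Z, (0 < k < l)%Z -> Cpow q k <> C1).

(* ---------- Gram matrix of the simple roots of a simple Lie algebra ----------
   B i j = (alpha_i, alpha_j), indices 0..n-1.  Normalisation: the invariant
   form is scaled so that short roots have (alpha,alpha) = 2 (so all the
   (alpha_i,alpha_j) are integers). *)
Definition cartan (B : nat -> nat -> Z) (i j : nat) : Z :=
  (2 * B i j / B i i)%Z.

Inductive linked (n : nat) (B : nat -> nat -> Z) (i : nat) : nat -> Prop :=
  | linked_refl : linked n B i i
  | linked_step j k : linked n B i j -> (k < n)%nat -> B j k <> 0%Z ->
                      linked n B i k.

(* B is the Gram matrix (w.r.t. the normalised invariant form) of the simple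
   roots of a complex finite-dimensional simple Lie algebra: a symmetric,
   positive definite, integer matrix whose associated matrix
   a_ij = 2 B_ij / B_ii is a generalized Cartan matrix (a_ii = 2, a_ij
   non-positive integer for i <> j), with connected Dynkin diagram
   (simplicity), normalised so that short simple roots have square length 2. *)
Definition simple_Lie_gram (n : nat) (B : nat -> nat -> Z) : Prop :=
  (1 <= n)%nat /\
  (forall i j, (i < n)%nat -> (j < n)%nat -> B i j = B j i) /\
  (forall i, (i < n)%nat -> (2 <= B i i)%Z) /\
  (exists i, (i < n)%nat /\ B i i = 2%Z) /\
  (forall i j, (i < n)%nat -> (j < n)%nat -> i <> j ->
     (B i i | 2 * B i j)%Z /\ (B i j <= 0)%Z) /\
  (forall x : nat -> R, (exists i, (i < n)%nat /\ x i <> 0) ->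
     0 < fsumR n (fun i => fsumR n (fun j => x i * x j * IZR (B i j)))) /\
  (forall i j, (i < n)%nat -> (j < n)%nat -> linked n B i j).

(* ---------- Weyl groupoid reflections ----------
   R^k : alpha_i |-> alpha_i - a_{ki} alpha_k ; coefficient vector of
   R^k(alpha_i) in the basis alpha_0..alpha_{n-1}. *)
Definition refl_coeff (B : nat -> nat -> Z) (k i t : nat) : Z :=
  ((if Nat.eqb t i then 1 else 0) - (if Nat.eqb t k then cartan B k i else 0))%Z.

(* m as a bilinear form: new matrix m'(i,j) = m(R^k alpha_i, R^k alpha_j) *)
Definition reflect_form (n : nat) (B : nat -> nat -> Z) (k : nat)
    (m : nat -> nat -> R) : nat -> nat -> R :=
  fun i j => fsumR n (fun s => fsumR n (fun t =>
     IZR (refl_coeff B k i s) * IZR (refl_coeff B k j t) * m s t)).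

(* q as a bicharacter on Z^n: q'(i,j) = q(R^k alpha_i, R^k alpha_j)
   = prod_{s,t} q_{st}^{c_i(s) c_j(t)} *)
Definition reflect_bichar (n : nat) (B : nat -> nat -> Z) (k : nat)
    (q : nat -> nat -> Cplx) : nat -> nat -> Cplx :=
  fun i j => fprodC n (fun s => fprodC n (fun t =>
     Cpow (q s t) (refl_coeff B k i s * refl_coeff B k j t)%Z)).

Definition reflect_form_seq n B (ks : list nat) m :=
  fold_left (fun m k => reflect_form n B k m) ks m.
Definition reflect_bichar_seq n B (ks : list nat) q :=
  fold_left (fun q k => reflect_bichar n B k q) ks q.

(* m realises q (the Cartan matrix of the braiding being that of g, i.e.
   cartan B) *)
Definition realises (n : nat) (B : nat -> nat -> Z)
    (m : nat -> nat -> R) (q : nat -> nat -> Cplx) : Prop :=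
  forall ks : list nat, Forall (fun k => (k < n)%nat) ks ->
    let m' := reflect_form_seq n B ks m in
    let q' := reflect_bichar_seq n B ks q in
    (forall i j, (i < n)%nat -> (j < n)%nat -> Cexp_ipi (m' i j) = q' i j) /\
    (forall i j, (i < n)%nat -> (j < n)%nat -> i <> j ->
       2 * m' i j = IZR (cartan B i j) * m' i i \/
       (1 - IZR (cartan B i j)) * m' i i = 2).

Definition ell_i (l : Z) (B : nat -> nat -> Z) (i : nat) : Z :=
  (l / Z.gcd l (B i i))%Z.

(* If 2 m_ij = a_ij m_ii, then m_ij = (m_ii / (alpha_i,alpha_i)) (alpha_i,alpha_j)
   because a_ij = 2 (alpha_i,alpha_j) / (alpha_i,alpha_i).  By symmetry of m,
   the ratio m_ii / (alpha_i,alpha_i) takes the same value at both ends of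
   every edge of the Dynkin diagram, so it is constant as the diagram is
   connected.  For the second statement it suffices to exclude alternative
   (B) for m itself (the empty sequence of reflections):
   (1 - a_ij) m_ii = 2 and e^{i pi m_ii} = q^{(alpha_i,alpha_i)} give
   q^{(alpha_i,alpha_i)(1 - a_ij)} = e^{2 pi i} = 1, so l divides
   (alpha_i,alpha_i)(1 - a_ij), whence l_i <= 1 - a_ij. *)
From Pilot Require Import Defs.
From Stdlib Require Import Reals ZArith List Lia Lra Psatz.
Open Scope R_scope.

Lemma Cplx_eq (z w : Cplx) : Cre z = Cre w -> Cim z = Cim w -> z = w.
Proof. destruct z, w; simpl; intros; subst; reflexivity. Qed.

Lemma Cmul_assoc a b c : Cmul a (Cmul b c) = Cmul (Cmul a b) c.
Proof. apply Cplx_eq; simpl; ring. Qed.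

Lemma Cmul_comm a b : Cmul a b = Cmul b a.
Proof. apply Cplx_eq; simpl; ring. Qed.

Lemma Cmul_1l a : Cmul Defs.C1 a = a.
Proof. apply Cplx_eq; simpl; ring. Qed.

Lemma Cpow_nat_add z a b : Cpow_nat z (a + b) = Cmul (Cpow_nat z a) (Cpow_nat z b).
Proof.
  induction a as [|a IH]; simpl.
  - now rewrite Cmul_1l.
  - rewrite IH; apply Cmul_assoc.
Qed.

Lemma Cpow_nat_C1 k : Cpow_nat Defs.C1 k = Defs.C1.
Proof. induction k as [|k IH]; simpl; [reflexivity | now rewrite IH, Cmul_1l]. Qed.

Lemma Cpow_nat_mul z a b : Cpow_nat z (a * b) = Cpow_nat (Cpow_nat z a) b.
Proof.
  induction b as [|b IH]; simpl.
  - now rewrite Nat.mul_0_r.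
  - rewrite Nat.mul_succ_r, Cpow_nat_add, IH; apply Cmul_comm.
Qed.

Lemma Cpow_pos z k : (0 < k)%Z -> Cpow z k = Cpow_nat z (Z.to_nat k).
Proof. destruct k; simpl; intros; [lia | reflexivity | lia]. Qed.

Lemma Cexp_ipi_add x y : Cmul (Cexp_ipi x) (Cexp_ipi y) = Cexp_ipi (x + y).
Proof.
  apply Cplx_eq; simpl; rewrite Rmult_plus_distr_l.
  - rewrite cos_plus; ring.
  - rewrite sin_plus; ring.
Qed.

Lemma Cexp_ipi_0 : Cexp_ipi 0 = Defs.C1.
Proof. apply Cplx_eq; simpl; rewrite Rmult_0_r; [apply cos_0 | apply sin_0]. Qed.

Lemma Cexp_ipi_2 : Cexp_ipi 2 = Defs.C1.
Proof. apply Cplx_eq; simpl; rewrite Rmult_comm; [apply cos_2PI | apply sin_2PI]. Qed.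

Lemma Cpow_nat_Cexp_ipi x k : Cpow_nat (Cexp_ipi x) k = Cexp_ipi (INR k * x).
Proof.
  induction k as [|k IH]; cbn [Cpow_nat].
  - now rewrite Rmult_0_l, Cexp_ipi_0.
  - rewrite IH, Cexp_ipi_add, S_INR; f_equal; ring.
Qed.

Lemma primitive_root_divides l q N :
  primitive_root l q -> Cpow_nat q N = Defs.C1 -> (l | Z.of_nat N)%Z.
Proof.
  intros [Hl [Hql Hmin]] HN.
  set (L := Z.to_nat l).
  assert (HqL : Cpow_nat q L = Defs.C1) by (rewrite <- Hql, Cpow_pos by lia; reflexivity).
  pose proof (Nat.div_mod_eq N L) as Hdiv.
  pose proof (Nat.mod_upper_bound N L ltac:(unfold L; lia)).
  destruct (Nat.eq_dec (N mod L) 0) as [H0 | H0].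
  - exists (Z.of_nat (N / L)); unfold L in *; lia.
  - exfalso; apply (Hmin (Z.of_nat (N mod L))); [unfold L in *; lia |].
    rewrite Cpow_pos, Nat2Z.id by lia.
    now rewrite Hdiv, Cpow_nat_add, Cpow_nat_mul, HqL, Cpow_nat_C1, Cmul_1l in HN.
Qed.

(* l / gcd(l, b) divides c by Gauss, since it is coprime to b / gcd(l, b). *)
Lemma Z_div_gcd_le l b c :
  (0 < l)%Z -> (0 < c)%Z -> (l | b * c)%Z -> (l / Z.gcd l b <= c)%Z.
Proof.
  intros Hl Hc [k Hk].
  assert (Hg : Z.gcd l b <> 0%Z) by (intro E; apply Z.gcd_eq_0 in E; lia).
  pose proof (Z.gcd_div_gcd l b _ Hg eq_refl) as Hcop.
  destruct (Z.gcd_divide_l l b) as [l' El].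
  destruct (Z.gcd_divide_r l b) as [b' Eb].
  set (g := Z.gcd l b) in *.
  pose proof (Z.gcd_nonneg l b).
  assert (El' : (l / g = l')%Z) by (rewrite El; apply Z.div_mul; lia).
  assert (Eb' : (b / g = b')%Z) by (rewrite Eb; apply Z.div_mul; lia).
  rewrite El', Eb' in *.
  apply Z.divide_pos_le; [lia |].
  apply (Z.gauss _ b'); [exists k | exact Hcop].
  apply (Z.mul_reg_r _ _ g); [lia | nia].
Qed.

Lemma primitive_root_Cexp_ipi_bound l q b c x :
  primitive_root l q -> (0 < b)%Z -> (0 < c)%Z ->
  Cexp_ipi x = Cpow q b -> IZR c * x = 2 -> (l / Z.gcd l b <= c)%Z.
Proof.
  intros Hq Hb Hc Hx Hcx.
  apply Z_div_gcd_le; [apply Hq | exact Hc |].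
  replace (b * c)%Z with (Z.of_nat (Z.to_nat b * Z.to_nat c)) by lia.
  apply (primitive_root_divides l q _ Hq).
  rewrite Cpow_nat_mul, <- (Cpow_pos q b Hb), <- Hx, Cpow_nat_Cexp_ipi.
  now rewrite INR_IZR_INZ, Z2Nat.id, Hcx, Cexp_ipi_2 by lia.
Qed.

Lemma linked_lt n B i k : (i < n)%nat -> linked n B i k -> (k < n)%nat.
Proof. intros Hi Hk; destruct Hk; assumption. Qed.

Lemma linked_const n B (f : nat -> R) i k :
  (forall j k, (j < n)%nat -> (k < n)%nat -> B j k <> 0%Z -> f k = f j) ->
  (i < n)%nat -> linked n B i k -> f k = f i.
Proof.
  intros Hedge Hi Hk.
  induction Hk as [| j k Hj IH Hk Hjk]; [reflexivity |].
  rewrite <- IH; apply Hedge; [exact (linked_lt n B i j Hi Hj) | exact Hk | exact Hjk].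
Qed.

Section CartanForms.

Variables (n : nat) (B : nat -> nat -> Z).
Hypothesis HB : simple_Lie_gram n B.

Lemma cartan_spec i j : (i < n)%nat -> (j < n)%nat -> i <> j ->
  (2 * B i j = cartan B i j * B i i)%Z /\ (cartan B i j <= 0)%Z.
Proof.
  destruct HB as (_ & _ & Hdiag & _ & Hoff & _).
  intros Hi Hj Hij; destruct (Hoff i j Hi Hj Hij) as [[k Hk] Hle].
  pose proof (Hdiag i Hi).
  unfold cartan; rewrite Hk, Z.div_mul by lia; split; [lia | nia].
Qed.

Variable m : nat -> nat -> R.
Hypothesis Hsym : forall i j, (i < n)%nat -> (j < n)%nat -> m i j = m j i.
Hypothesis Hcartan : forall i j, (i < n)%nat -> (j < n)%nat -> i <> j ->
  2 * m i j = IZR (cartan B i j) * m i i.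

Definition diag_ratio (i : nat) : R := m i i / IZR (B i i).

Lemma cartan_form_row i j : (i < n)%nat -> (j < n)%nat ->
  m i j = diag_ratio i * IZR (B i j).
Proof.
  intros Hi Hj; pose proof HB as (_ & _ & Hdiag & _).
  assert (Hbi : IZR (B i i) <> 0) by (apply not_0_IZR; pose proof (Hdiag i Hi); lia).
  unfold diag_ratio; destruct (Nat.eq_dec i j) as [<- | Hij]; [field; exact Hbi |].
  destruct (cartan_spec i j Hi Hj Hij) as [E _].
  apply (f_equal IZR) in E; rewrite !mult_IZR in E.
  pose proof (Hcartan i j Hi Hj Hij).
  apply (Rmult_eq_reg_l (2 * IZR (B i i))); [| apply Rmult_integral_contrapositive; lra].
  field_simplify; [nra | exact Hbi].
Qed.

Lemma diag_ratio_edge j k : (j < n)%nat -> (k < n)%nat -> B j k <> 0%Z ->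
  diag_ratio k = diag_ratio j.
Proof.
  intros Hj Hk Hjk; pose proof HB as (_ & HBsym & _).
  apply (Rmult_eq_reg_r (IZR (B j k))); [| now apply not_0_IZR].
  rewrite <- cartan_form_row, Hsym, cartan_form_row by assumption.
  now rewrite (HBsym k j Hk Hj).
Qed.

Lemma cartan_form_proportional :
  exists r : R, forall i j, (i < n)%nat -> (j < n)%nat -> m i j = r * IZR (B i j).
Proof.
  destruct HB as (Hn & _ & _ & _ & _ & _ & Hlinked).
  exists (diag_ratio 0); intros i j Hi Hj.
  rewrite cartan_form_row by assumption; f_equal.
  apply (linked_const n B diag_ratio 0 i diag_ratio_edge); [lia | apply Hlinked; lia].
Qed.

End CartanForms.

Theorem mainTheorem4 (n : nat) (B : nat -> nat -> Z) (HB : simple_Lie_gram n B) :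
  (forall m : nat -> nat -> R,
     (forall i j, (i < n)%nat -> (j < n)%nat -> m i j = m j i) ->
     (forall i j, (i < n)%nat -> (j < n)%nat -> i <> j ->
        2 * m i j = IZR (cartan B i j) * m i i) ->
     exists r : R, forall i j, (i < n)%nat -> (j < n)%nat -> m i j = r * IZR (B i j))
  /\
  (forall (l : Z) (q : Cplx) (m : nat -> nat -> R),
     primitive_root l q ->
     (forall i j, (i < n)%nat -> (j < n)%nat -> i <> j ->
        (ell_i l B i > 1 - cartan B i j)%Z) ->
     (forall i j, (i < n)%nat -> (j < n)%nat -> m i j = m j i) ->
     realises n B m (fun i j => Cpow q (B i j)) ->
     exists r : R, forall i j, (i < n)%nat -> (j < n)%nat -> m i j = r * IZR (B i j)).
Proof.
  split; [exact (cartan_form_proportional n B HB) |].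
  intros l q m Hq Hell Hsym Hreal.
  apply (cartan_form_proportional n B HB m Hsym).
  intros i j Hi Hj Hij.
  destruct (Hreal nil (Forall_nil _)) as [Hexp Halt]; simpl in Hexp, Halt.
  destruct (Halt i j Hi Hj Hij) as [HA | Hcase_B]; [exact HA | exfalso].
  pose proof HB as (_ & _ & Hdiag & _); pose proof (Hdiag i Hi).
  pose proof (proj2 (cartan_spec n B HB i j Hi Hj Hij)).
  pose proof (Hell i j Hi Hj Hij) as Hlarge; unfold ell_i in Hlarge.
  enough (l / Z.gcd l (B i i) <= 1 - cartan B i j)%Z by lia.
  apply (primitive_root_Cexp_ipi_bound l q _ _ (m i i) Hq); [lia | lia | exact (Hexp i i Hi Hi) |].
  now rewrite minus_IZR.
Qed.
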